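(* Let $P$ be a probability measure on $(\Omega,\mathcal A)$, let $\delta\in(\tfrac12,1)$, and let $\bar{\mathbf C}\subseteq\bar{\mathcal A}$ be a C-class. If $\bar T(P,\delta)\subseteq\bar{\mathbf C}$, then $\bar T(P,\delta)\sim\bar{\mathbf C}$; equivalently, $\bar M_{\bar{\mathbf C}}=\bar P$ on $\bar{\mathcal A}$.
   Context: Let $(\Omega,\mathcal A)$ be a measurable space. For $n\ge1$, $\mathcal A^n$ is the product $\sigma$-algebra on $\Omega^n$; the extended event space is $\bar{\mathcal A}=\bigcup_{n\ge1}\mathcal A^n$, events tagged by their level $n$ (written $A^{(n)}$). For $k\ge1$, $(\Omega^n)^k$ is identified with $\Omega^{nk}$ and $(\mathcal A^n)^k$ with $\mathcal A^{nk}$. For a probability measure $P$ on $\mathcal A$, $P^n$ is its $n$-fold product, $\bar P(A^{(n)})=P^n(A^{(n)})$, and $\bar T(P,\delta)=\{A\in\bar{\mathcal A}:\bar P(A)\ge\delta\}$. For $A^{(n)}\in\mathcal A^n$, an interval $I\subseteq[0,1]$ and $k\in\mathbb N^+$, $S(A^{(n)},I,k)=\{(\omega_1,\dots,\omega_k)\in(\Omega^n)^k:\frac1k\sum_{i=1}^k\chi_{A^{(n)}}(\omega_i)\in I\}$. A class $\bar{\mathbf C}\subseteq\bar{\mathcal A}$ is a C-class if for every $n$ the component $\mathcal C^{(n)}=\bar{\mathbf C}\cap\mathcal A^n$ satisfies: $\Omega^n\in\mathcal C^{(n)}$; if $A\in\mathcal C^{(n)}$, $B\in\mathcal A^n$,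 $A\subseteq B$ then $B\in\mathcal C^{(n)}$; $\mathcal C^{(n)}$ contains no two disjoint events. ''$S(A,I,k)\in\bar{\mathbf C}$ definitively'' means there is $k_0$ with $S(A,I,k)\in\bar{\mathbf C}$ for all $k>k_0$. The C-measure of a C-class is $\bar M_{\bar{\mathbf C}}(A)=\sup\{\sigma\in[0,1]: S(A,[\sigma,1],k)\in\bar{\mathbf C}\text{ definitively}\}$. Two C-classes are (asymptotically) equivalent, $\bar{\mathbf C}_1\sim\bar{\mathbf C}_2$, if $\bar M_{\bar{\mathbf C}_1}=\bar M_{\bar{\mathbf C}_2}$. *)

From HB Require Import structures.
From mathcomp Require Import all_boot all_order all_algebra.
From mathcomp Require Import all_classical all_reals all_analysis.
Set Implicit Arguments. Unset Strict Implicit. Unset Printing Implicit Defensive.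
Import Order.TTheory GRing.Theory Num.Theory.
Local Open Scope classical_set_scope.
Local Open Scope ring_scope.

(* Level-n events live in the measurable type n.-tuple T, equipped by
   mathcomp-analysis with the product sigma-algebra (generated by the
   coordinate projections).  Levels n >= 1 are the meaningful ones. *)

Fixpoint prodP d (T : measurableType d) (R : realType)
  (P : probability T R) (n : nat) : set (n.-tuple T) -> \bar R :=
  match n as m return set (m.-tuple T) -> \bar R with
  | 0 => fun A => ((\1_A [tuple] : R)%:E)
  | m.+1 => fun A =>
      (\int[P]_x prodP P [set t : m.-tuple T | A (cons_tuple x t)])%E
  end.

(* index of coordinate j of block i in the identification
   (Omega^n)^k = Omega^(n k) (blocks concatenated) *)
Lemma block_idx_lt (n k : nat) (i : 'I_k) (j : 'I_n) : (i * n + j < n * k)%N.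
Proof.
case: i => i /= hi; case: j => j /= hj.
apply: (@leq_trans (i * n + n)%N); first by rewrite ltn_add2l.
by rewrite -mulSnr mulnC leq_mul2l hi orbT.
Qed.

Definition block (T : Type) (n k : nat) (w : (n * k).-tuple T) (i : 'I_k)
  : n.-tuple T :=
  [tuple tnth w (Ordinal (block_idx_lt i j)) | j < n].
Arguments block {T n k} w i.

Definition Sev (T : Type) (R : realType) (n : nat) (A : set (n.-tuple T))
  (I : interval R) (k : nat) : set ((n * k).-tuple T) :=
  [set w | (k%:R^-1 * \sum_(i < k) (\1_A (block w i) : R)) \in I].
Arguments Sev {T R n} A I k.

(* a class of extended events, given by its components C n at each level *)
Definition xclass d (T : measurableType d) := forall n : nat, set (set (n.-tuple T)).

Definition is_Cclass d (T : measurableType d) (C : xclass T) : Prop :=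
  forall n : nat, (0 < n)%N ->
    [/\ (forall A, C n A -> measurable A),
        C n setT,
        (forall A B, C n A -> measurable B -> A `<=` B -> C n B) &
        (forall A B, C n A -> C n B -> A `&` B <> set0)].

Definition definitively_in d (T : measurableType d) (R : realType)
  (C : xclass T) (n : nat) (A : set (n.-tuple T)) (s : R) : Prop :=
  exists k0 : nat, forall k : nat, (k0 < k)%N ->
    C (n * k)%N (Sev A (Interval (BLeft s) (BRight 1)) k).

Definition Cmeasure d (T : measurableType d) (R : realType)
  (C : xclass T) (n : nat) (A : set (n.-tuple T)) : \bar R :=
  ereal_sup [set (s%:E)%E | s in [set s : R | 0 <= s <= 1 /\
                                   definitively_in C A s]].

Definition Tclass d (T : measurableType d) (R : realType)
  (P : probability T R) (delta : R) : xclass T :=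
  fun n A => measurable A /\ (delta%:E <= prodP P A)%E.
Arguments Tclass {d T R} P delta n A.
Arguments Cmeasure {d T R} C {n} A.

From HB Require Import structures.
From mathcomp Require Import all_boot all_order all_algebra.
From mathcomp Require Import all_classical all_reals all_analysis.
From mathcomp Require Import measurable_realfun ring lra.

(* Let p = P^n(A) and let N_k count the blocks of omega in (Omega^n)^k that fall
   in A, so that S(A, [s, 1], k) = {N_k >= k s}.  Under P^(nk) the count N_k has
   mean k p and variance k p (1 - p), so by Chebyshev the event
   {|N_k - k p| < k eps} has probability at least 1 - 1/(k eps^2), which
   eventually exceeds delta.  For s < p this event is contained in
   S(A, [s, 1], k), which therefore eventually lies in T(P, delta), hence in C;
   for s > p it is disjoint from S(A, [s, 1], k), which therefore cannot lie in
   C, since C contains no event disjoint from a member of T(P, delta).  So the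
   C-measure of A is p.  The same argument applies to T(P, delta) itself: for
   delta > 1/2 two events of probability at least delta always meet. *)
Set Implicit Arguments. Unset Strict Implicit. Unset Printing Implicit Defensive.
Import Order.TTheory GRing.Theory Num.Theory.
Local Open Scope classical_set_scope.
Local Open Scope ring_scope.

Section iterated_expectation.
Context d (T : measurableType d) (R : realType) (P : probability T R).
Local Open Scope ereal_scope.

Fixpoint prodE (n : nat) : (n.-tuple T -> \bar R) -> \bar R :=
  match n as m return (m.-tuple T -> \bar R) -> \bar R with
  | 0 => fun f => f [tuple]
  | m.+1 => fun f => \int[P]_x prodE (fun t => f (cons_tuple x t))
  end.
Arguments prodE : clear implicits.

Lemma eq_prodE n (f g : n.-tuple T -> \bar R) : f =1 g -> prodE n f = prodE n g.
Proof. by move=> /funext ->. Qed.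

Lemma prodE_ge0 n f : (forall t, 0 <= f t) -> 0 <= prodE n f.
Proof.
elim: n f => [|n IH] f f0 /=; first exact: f0.
by apply: integral_ge0 => x _; apply: IH.
Qed.

Lemma measurable_prodE n d' (Y : measurableType d') (f : Y * n.-tuple T -> \bar R) :
  (forall z, 0 <= f z) -> measurable_fun setT f ->
  measurable_fun setT (fun y => prodE n (fun t => f (y, t))).
Proof.
elim: n d' Y f => [|n IH] d' Y f f0 mf /=.
  by apply: (measurableT_comp mf); apply: measurable_fun_pair.
pose g (z : (Y * T) * n.-tuple T) := f (z.1.1, cons_tuple z.1.2 z.2).
have mg : measurable_fun setT g.
  apply: (measurableT_comp mf); apply: measurable_fun_pair.
    exact: measurableT_comp.
  apply: measurable_cons => //; exact: measurableT_comp.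
move: (IH _ _ g (fun z => f0 _) mg) => /(measurable_fun_fubini_tonelli_F _) H.
exact: (H P (fun z => prodE_ge0 (fun t => f0 _))).
Qed.

Lemma measurable_prodE_cons n (f : n.+1.-tuple T -> \bar R) :
  (forall t, 0 <= f t) -> measurable_fun setT f ->
  measurable_fun setT (fun x => prodE n (fun t => f (cons_tuple x t))).
Proof.
move=> f0 mf; pose g (z : T * n.-tuple T) := f (cons_tuple z.1 z.2).
have mg : measurable_fun setT g by apply: measurableT_comp mf _; exact: measurable_cons.
exact: (@measurable_prodE n _ _ g (fun z => f0 _) mg).
Qed.

Lemma measurable_cons_tuple n (x : T) :
  measurable_fun [set: n.-tuple T] (cons_tuple x).
Proof. exact: measurable_cons. Qed.

Lemma prodED n (f g : n.-tuple T -> \bar R) :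
  (forall t, 0 <= f t) -> measurable_fun setT f ->
  (forall t, 0 <= g t) -> measurable_fun setT g ->
  prodE n (fun t => f t + g t) = prodE n f + prodE n g.
Proof.
elim: n f g => [|n IH] f g f0 mf g0 mg //=.
rewrite -ge0_integralD //;
  try by [move=> x _; exact: prodE_ge0 | exact: measurable_prodE_cons].
apply: eq_integral => x _;
  apply: IH => //; exact: measurableT_comp (@measurable_cons_tuple _ x).
Qed.

Lemma prodEZ n (c : R) (f : n.-tuple T -> \bar R) : (0 <= c)%R ->
  (forall t, 0 <= f t) -> measurable_fun setT f ->
  prodE n (fun t => c%:E * f t) = c%:E * prodE n f.
Proof.
move=> c0; elim: n f => [|n IH] f f0 mf //=.
rewrite -ge0_integralZl_EFin //;
  try by [move=> x _; exact: prodE_ge0 | exact: measurable_prodE_cons].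
apply: eq_integral => x _;
  apply: IH => //; exact: measurableT_comp (@measurable_cons_tuple _ x).
Qed.

Lemma prodE_cst n (c : \bar R) : prodE n (fun _ => c) = c.
Proof.
elim: n => [|n IH] //=.
under eq_integral do rewrite IH.
have PT : (P : {measure set T -> \bar R}) setT = 1 := probability_setT P.
by rewrite integral_cst // PT mule1.
Qed.

Lemma le_prodE n (f g : n.-tuple T -> \bar R) :
  (forall t, 0 <= f t) -> measurable_fun setT f -> measurable_fun setT g ->
  (forall t, f t <= g t) -> prodE n f <= prodE n g.
Proof.
elim: n f g => [|n IH] f g f0 mf mg fg //=.
have g0 t : 0 <= g t by exact: le_trans (f0 t) (fg t).
apply: ge0_le_integral => //;
  try by [move=> x _; exact: prodE_ge0 | exact: measurable_prodE_cons].
move=> x _; apply: IH => //; exact: measurableT_comp (@measurable_cons_tuple _ x).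
Qed.

Lemma prodE_indic n (A : set (n.-tuple T)) :
  prodE n (fun t => (\1_A t : R)%:E) = prodP P A.
Proof. by elim: n A => [|n IH] A //=; apply: eq_integral => x _; rewrite IH. Qed.

Lemma prodE_cat n m (h : (n + m).-tuple T -> \bar R) :
  prodE (n + m) h = prodE n (fun u => prodE m (fun v => h (cat_tuple u v))).
Proof.
elim: n h => [|n IH] h /=; first by apply: eq_prodE => v; congr h; exact: val_inj.
apply: eq_integral => x _; rewrite IH.
by apply: eq_prodE => u; apply: eq_prodE => v; congr h; exact: val_inj.
Qed.

Lemma prodE_tcast n m (e : n = m) (f : m.-tuple T -> \bar R) :
  prodE m f = prodE n (fun t => f (tcast e t)).
Proof. by case: m / e in f *; apply: eq_prodE => t; rewrite tcast_id. Qed.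

End iterated_expectation.
Arguments prodE {d T R} P n f.
Arguments prodE_cst {d T R} P n c.

Lemma measurable_ge_set d (T : measurableType d) (R : realType) (f : T -> R) (c : R) :
  measurable_fun setT f -> measurable [set t | c <= f t].
Proof.
move=> /(_ measurableT _ (measurable_itv `[c, +oo[)); rewrite setTI.
by congr measurable; apply/seteqP; split => t /=; rewrite in_itv /= andbT.
Qed.

Section product_probability.
Context d (T : measurableType d) (R : realType) (P : probability T R).
Local Open Scope ereal_scope.

Lemma indic_ge0 n (A : set (n.-tuple T)) t : 0 <= (\1_A t : R)%:E.
Proof. by rewrite lee_fin indicE. Qed.

Lemma measurable_EFin_indic n (A : set (n.-tuple T)) :
  measurable A -> measurable_fun setT (fun t => (\1_A t : R)%:E).
Proof. by move=> mA; exact/measurable_EFinP/measurable_indic. Qed.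

Lemma prodP_setT n : prodP P [set: n.-tuple T] = 1.
Proof.
by rewrite -prodE_indic; under eq_prodE do rewrite indicE in_setT; rewrite prodE_cst.
Qed.

Lemma le_prodP n (A B : set (n.-tuple T)) : measurable A -> measurable B ->
  A `<=` B -> prodP P A <= prodP P B.
Proof.
move=> mA mB AB; rewrite -!prodE_indic.
apply: le_prodE => [t|||t]; [exact: indic_ge0|exact: measurable_EFin_indic..|].
rewrite lee_fin !indicE.
by case: (boolP (t \in A)) => [/set_mem/AB/mem_set ->|_] //; case: (_ \in _).
Qed.

Lemma prodP_setC n (A : set (n.-tuple T)) : measurable A ->
  prodP P (~` A) + prodP P A = 1.
Proof.
move=> mA; rewrite -!prodE_indic -prodED; try exact: indic_ge0;
  try exact: measurable_EFin_indic (measurableC mA);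
  try exact: measurable_EFin_indic mA.
rewrite -[RHS](prodE_cst P n); apply: eq_prodE => t.
by rewrite -EFinD indicC indicE /=; case: (t \in A); rewrite ?add0r ?addr0.
Qed.

Definition probP n (A : set (n.-tuple T)) : R := fine (prodP P A).

Lemma prodP_probP n (A : set (n.-tuple T)) : measurable A ->
  prodP P A = (probP A)%:E.
Proof.
move=> mA; rewrite /probP fineK // ge0_fin_numE; last first.
  by rewrite -prodE_indic; apply: prodE_ge0 => t; exact: indic_ge0.
by rewrite (le_lt_trans (le_prodP mA measurableT (@subsetT _ A))) // prodP_setT ltry.
Qed.

Lemma probP_ge0 n (A : set (n.-tuple T)) : (0 <= probP A)%R.
Proof.
by apply/fine_ge0; rewrite -prodE_indic; apply: prodE_ge0 => t; exact: indic_ge0.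
Qed.

Lemma le_probP n (A B : set (n.-tuple T)) : measurable A -> measurable B ->
  A `<=` B -> (probP A <= probP B)%R.
Proof.
by move=> mA mB AB; rewrite -lee_fin -!prodP_probP //; exact: le_prodP.
Qed.

Lemma probP_le1 n (A : set (n.-tuple T)) : measurable A -> (probP A <= 1)%R.
Proof.
move=> mA; rewrite -lee_fin -prodP_probP // -(prodP_setT n).
exact: le_prodP mA measurableT (@subsetT _ A).
Qed.

Lemma probP_setC n (A : set (n.-tuple T)) : measurable A ->
  probP (~` A) = (1 - probP A)%R.
Proof.
move=> mA; have := prodP_setC mA.
by rewrite !prodP_probP //; [case=> <-; rewrite addrK | exact: measurableC].
Qed.

Lemma probP_disjoint n (A B : set (n.-tuple T)) : measurable A -> measurable B ->
  A `&` B = set0 -> (probP A + probP B <= 1)%R.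
Proof.
move=> mA mB AB0; rewrite -lerBrDl -probP_setC //.
apply: le_probP => //; first exact: measurableC.
by move=> t Bt At; have : (A `&` B) t by []; rewrite AB0.
Qed.

Lemma markov_prodP m (f : m.-tuple T -> R) (c : R) : (0 <= c)%R ->
  (forall t, 0 <= f t)%R -> measurable_fun setT f ->
  c%:E * prodP P [set t | (c <= f t)%R] <= prodE P m (fun t => (f t)%:E).
Proof.
move=> c0 f0 mf; have mfc := measurable_ge_set c mf.
rewrite -prodE_indic -prodEZ //; try exact: indic_ge0;
  try exact: measurable_EFin_indic.
apply: le_prodE => [t|||t].
- by rewrite -EFinM lee_fin mulr_ge0 // indicE.
- by apply/measurable_EFinP/measurable_funM => //; exact: measurable_indic.
- exact/measurable_EFinP.
rewrite -EFinM lee_fin indicE; case: (boolP (t \in _)) => [/set_mem|_] /=.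
  by rewrite mulr1.
by rewrite mulr0.
Qed.

End product_probability.

Section block_count.
Context d (T : measurableType d) (R : realType).

Definition block_count n (A : set (n.-tuple T)) k (w : (n * k).-tuple T) : R :=
  \sum_(i < k) \1_A (block w i).
Arguments block_count {n} A k w.

Lemma measurable_block n k (i : 'I_k) :
  measurable_fun [set: (n * k).-tuple T] (block ^~ i).
Proof.
apply/measurable_fun_tnthP => j.
rewrite (_ : _ \o _ = fun w => tnth w (Ordinal (block_idx_lt i j))).
  exact: measurable_tnth.
by apply: funext => w /=; rewrite tnth_mktuple.
Qed.

Lemma measurable_block_count n (A : set (n.-tuple T)) k : measurable A ->
  measurable_fun setT (block_count A k).
Proof.
move=> mA; apply: measurable_sum => i.
exact: measurableT_comp (measurable_indic mA) (measurable_block i).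
Qed.

Lemma block_count_ge0 n (A : set (n.-tuple T)) k w : 0 <= block_count A k w.
Proof. by apply: sumr_ge0 => i _; rewrite indicE. Qed.

Lemma block_count_le n (A : set (n.-tuple T)) k w : block_count A k w <= k%:R.
Proof.
rewrite /block_count -[k in k%:R]card_ord -sumr_const.
by apply: ler_sum => i _; rewrite indicE; case: (_ \in _).
Qed.

Lemma block_count_cat n (A : set (n.-tuple T)) k u v :
  block_count A k.+1 (tcast (esym (mulnS n k)) (cat_tuple u v)) =
  \1_A u + block_count A k v.
Proof.
rewrite /block_count big_ord_recl; congr (\1_A _ + _).
  apply: eq_from_tnth => j; rewrite tnth_mktuple tcastE -(tnth_lshift u v).
  by congr tnth; apply: val_inj; rewrite /= mul0n add0n.
apply: eq_bigr => i _; congr (\1_A _).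
apply: eq_from_tnth => j; rewrite !tnth_mktuple tcastE -(tnth_rshift u v).
by congr tnth; apply: val_inj; rewrite /= /bump /= add1n mulSn addnA.
Qed.

Lemma Sev_itv1E n (A : set (n.-tuple T)) (s : R) k : (0 < k)%N ->
  Sev A `[s, 1] k = [set w | s * k%:R <= block_count A k w].
Proof.
move=> k0; have kpos : (0 < k%:R :> R) by rewrite ltr0n.
apply/seteqP; split => w; rewrite /Sev /= in_itv /= ler_pdivlMl // mulrC.
  by case/andP.
by move=> ->; rewrite ler_pdivrMl // mulr1 block_count_le.
Qed.

Lemma measurable_Sev n (A : set (n.-tuple T)) (I : interval R) k :
  measurable A -> measurable (Sev A I k).
Proof.
move=> mA.
have /(_ measurableT _ (measurable_itv I)) := measurable_funM
  (measurable_cst (k%:R^-1 : R)) (measurable_block_count (k:=k) mA).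
by rewrite setTI.
Qed.

End block_count.
Arguments block_count {d T R n} A k w.

Section block_count_moments.
Context d (T : measurableType d) (R : realType) (P : probability T R).
Context n (A : set (n.-tuple T)) (mA : measurable A).
Local Open Scope ereal_scope.
Local Notation p := (probP P A).
Local Notation S := (block_count A).

Let EFin_ge0 (x : R) : (0 <= x)%R -> 0 <= x%:E. Proof. by rewrite lee_fin. Qed.

Local Ltac ge0_side := try move=> ?; rewrite -?EFinM -?EFinD; try apply: EFin_ge0;
  repeat first [exact: sqr_ge0 | by rewrite subr_ge0 (probP_le1 P mA)
    | apply: addr_ge0 | apply: mulr_ge0 | exact: ler0n | done
    | exact: block_count_ge0 | exact: probP_ge0 | by rewrite indicE].
Local Ltac real_measurable := repeat first [exact: measurable_cst
  | exact: measurable_indic | exact: measurable_block_count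
  | apply: measurable_funD | apply: measurable_funM | apply: measurable_funX
  | apply: measurable_funB].
Local Ltac measurable_side := first [exact: measurable_cst
  | apply/measurable_EFinP; real_measurable
  | apply: emeasurable_funM; measurable_side].
Local Ltac side := try solve [ge0_side | measurable_side].

Lemma prodE_block_count_succ k (F : R -> R) :
  prodE P (n * k.+1) (fun w => (F (S k.+1 w))%:E) =
  prodE P n (fun u => prodE P (n * k) (fun v => (F (\1_A u + S k v)%R)%:E)).
Proof.
rewrite (prodE_tcast P (esym (mulnS n k))) prodE_cat.
by apply: eq_prodE => u; apply: eq_prodE => v; rewrite block_count_cat.
Qed.

Lemma prodE_block_count k : prodE P (n * k) (fun w => (S k w)%:E) = (k%:R * p)%:E.
Proof.
elim: k => [|k IH].
  under eq_prodE => w do rewrite /block_count big_ord0.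
  by rewrite prodE_cst mul0r.
have inner u : prodE P (n * k) (fun v => (\1_A u + S k v)%:E) =
    (\1_A u)%:E + (k%:R * p)%:E.
  by under eq_prodE do rewrite EFinD; rewrite prodED ?prodE_cst ?IH; side.
rewrite (prodE_block_count_succ k id); under eq_prodE do rewrite inner.
rewrite prodED ?prodE_cst ?prodE_indic ?prodP_probP //; side.
by rewrite -EFinD -natr1; congr EFin; ring.
Qed.

Lemma prodE_block_count_sqr k : prodE P (n * k) (fun w => (S k w ^+ 2)%:E) =
  (k%:R * p * (1 - p) + (k%:R * p) ^+ 2)%:E.
Proof.
elim: k => [|k IH].
  under eq_prodE => w do rewrite /block_count big_ord0 expr0n.
  by rewrite prodE_cst !mul0r expr0n add0r.
have inner u : prodE P (n * k) (fun v => ((\1_A u + S k v) ^+ 2)%:E) =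
    (\1_A u * (1 + 2 * (k%:R * p)))%:E +
    (k%:R * p * (1 - p) + (k%:R * p) ^+ 2)%:E.
  have indic_sqr : ((\1_A u : R) ^+ 2 = \1_A u)%R.
    by rewrite indicE; case: (_ \in _); rewrite ?expr1n ?expr0n.
  have expand v : (((\1_A u : R) + S k v) ^+ 2 =
      \1_A u + (2 * \1_A u * S k v + S k v ^+ 2) :> R)%R.
    by rewrite sqrrD indic_sqr; ring.
  under eq_prodE => v do rewrite expand EFinD EFinD EFinM.
  rewrite prodED; side; rewrite prodE_cst prodED; side; rewrite prodEZ; side.
  by rewrite prodE_block_count IH -EFinM -!EFinD; congr EFin; ring.
rewrite (prodE_block_count_succ k (fun x : R => x ^+ 2)%R).
under eq_prodE do rewrite inner.
rewrite prodED; side; under eq_prodE do rewrite mulrC EFinM.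
rewrite prodEZ; side; rewrite prodE_indic prodP_probP // prodE_cst -EFinM -EFinD.
by congr EFin; rewrite -natr1; ring.
Qed.

Lemma prodE_block_count_var k :
  prodE P (n * k) (fun w => ((S k w - k%:R * p) ^+ 2)%:E) = (k%:R * p * (1 - p))%:E.
Proof.
have expand : prodE P (n * k) (fun w => ((S k w - k%:R * p) ^+ 2)%:E +
      (2 * (k%:R * p))%:E * (S k w)%:E) =
    prodE P (n * k) (fun w => (S k w ^+ 2)%:E + ((k%:R * p) ^+ 2)%:E).
  by apply: eq_prodE => w; rewrite -EFinM -!EFinD; congr EFin; ring.
rewrite prodED in expand; side; rewrite prodEZ in expand; side.
rewrite prodED in expand; side.
rewrite prodE_block_count prodE_block_count_sqr prodE_cst in expand.
have : 0 <= prodE P (n * k) (fun w => ((S k w - k%:R * p) ^+ 2)%:E).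
  by apply: prodE_ge0; side.
move: expand; case: (prodE _ _ _) => [v| |] //; rewrite -EFinM -!EFinD => -[ev] _.
by congr EFin; rewrite -(addrK (2 * (k%:R * p) * (k%:R * p))%R v) ev; ring.
Qed.

End block_count_moments.

Lemma eventually_lt_1_subV (R : archiFieldType) (delta eps : R) :
  delta < 1 -> 0 < eps ->
  exists k0, forall k, (k0 < k)%N -> delta < 1 - (k%:R * eps ^+ 2)^-1.
Proof.
move=> d1 e0; set a := (1 - delta) * eps ^+ 2.
have a0 : 0 < a by rewrite mulr_gt0 ?subr_gt0 ?exprn_gt0.
exists (Num.truncn a^-1) => k hk.
have ak : a^-1 < k%:R by apply: lt_le_trans (truncnS_gt _) _; rewrite ler_nat.
have x0 : 0 < k%:R * eps ^+ 2.
  by rewrite mulr_gt0 ?exprn_gt0 // (lt_trans _ ak) ?invr_gt0.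
have xV : k%:R * eps ^+ 2 * (k%:R * eps ^+ 2)^-1 = 1 by rewrite mulfV ?gt_eqF.
have : 1 < k%:R * a by rewrite -[X in X < _](mulVf (lt0r_neq0 a0)) ltr_pM2r.
rewrite /a; nra.
Qed.

Section deviation.
Context d (T : measurableType d) (R : realType) (P : probability T R).
Context n (A : set (n.-tuple T)) (mA : measurable A).
Local Notation p := (probP P A).
Local Notation S := (block_count A).

Definition deviation k (eps : R) : set ((n * k).-tuple T) :=
  [set w | (k%:R * eps) ^+ 2 <= (S k w - k%:R * p) ^+ 2].
Arguments deviation : clear implicits.

Lemma measurable_sqr_deviation k :
  measurable_fun setT (fun w => (S k w - k%:R * p) ^+ 2).
Proof. by apply/measurable_funX/measurable_funB; [exact: measurable_block_count|]. Qed.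

Lemma measurable_deviation k eps : measurable (deviation k eps).
Proof. by apply: measurable_ge_set; exact: measurable_sqr_deviation. Qed.

Lemma probP_deviation_le k eps : (0 < k)%N -> 0 < eps ->
  probP P (deviation k eps) <= (k%:R * eps ^+ 2)^-1.
Proof.
move=> k0 e0; have kpos : 0 < k%:R :> R by rewrite ltr0n.
(* Markov's inequality for the squared deviation, whose mean k p (1 - p) is at most k *)
have markov := markov_prodP P (sqr_ge0 (k%:R * eps)) (fun w => sqr_ge0 _)
  (measurable_sqr_deviation (k:=k)).
rewrite prodE_block_count_var // -/(deviation k eps) in markov.
rewrite prodP_probP in markov; last exact: measurable_deviation.
move: markov; rewrite -EFinM lee_fin => markov.
have p0 := probP_ge0 P A; have p1 := probP_le1 P mA.
set q := probP P _ in markov *.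
have ke0 : 0 < k%:R * eps ^+ 2 by rewrite mulr_gt0 ?exprn_gt0.
rewrite -(ler_pM2l ke0) mulfV ?gt_eqF // -(ler_pM2l kpos).
by apply: le_trans (_ : _ <= k%:R * p * (1 - p)) _; nra.
Qed.

Lemma deviationC_in_Tclass (delta eps : R) : delta < 1 -> 0 < eps ->
  exists k0, forall k, (k0 < k)%N -> Tclass P delta (n * k) (~` deviation k eps).
Proof.
move=> d1 e0; have [k0 hk0] := eventually_lt_1_subV d1 e0.
exists k0 => k hk; have k0' : (0 < k)%N by apply: leq_ltn_trans hk.
have mD : measurable (deviation k eps) by exact: measurable_deviation.
split; first exact: measurableC.
rewrite prodP_probP ?probP_setC ?lee_fin //; last exact: measurableC.
by apply: le_trans (ltW (hk0 k hk)) _; rewrite lerB // probP_deviation_le.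
Qed.

Lemma deviationC_sub_Sev k (s : R) : (0 < k)%N -> s < p ->
  ~` deviation k (p - s) `<=` Sev A `[s, 1] k.
Proof.
move=> k0 sp; rewrite Sev_itv1E // => w /negP; rewrite -ltNge /= => dev.
have kps : 0 < k%:R * (p - s) by rewrite mulr_gt0 ?ltr0n ?subr_gt0.
rewrite leNgt; apply/negP => Ss.
have : 0 < 2 * k%:R * p - k%:R * s - S k w by nra.
nra.
Qed.

Lemma deviationC_Sev_disjoint k (s : R) : (0 < k)%N -> p < s ->
  ~` deviation k (s - p) `&` Sev A `[s, 1] k = set0.
Proof.
move=> k0 ps; rewrite Sev_itv1E //; apply/seteqP; split => // w [/negP].
rewrite -ltNge /= => dev ksS.
have ksp : 0 < k%:R * (s - p) by rewrite mulr_gt0 ?ltr0n ?subr_gt0.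
have : 0 < S k w + k%:R * s - 2 * k%:R * p by nra.
nra.
Qed.

End deviation.
Arguments deviation {d T R} P {n} A k eps.

Lemma ereal_sup_EFin_eq (R : realType) (S : set R) (p : R) :
  S 0 -> (forall s, 0 <= s -> s < p -> S s) -> (forall s, S s -> s <= p) ->
  ereal_sup (EFin @` S) = p%:E.
Proof.
move=> S0 Slt Sle; have ubS : has_ubound S by exists p.
rewrite ereal_sup_EFin //; last by exists 0.
congr EFin; apply/eqP; rewrite eq_le; apply/andP; split.
  by apply: sup_le_ub; [exists 0 | exact: Sle].
rewrite leNgt; apply/negP => supp.
have sup0 : 0 <= sup S by exact: ub_le_sup.
have [lt_sup_mid lt_mid_p] := midf_lt supp.
have : (sup S + p) / 2 <= sup S.
  by apply/ub_le_sup/Slt => //; rewrite divr_ge0 ?addr_ge0 // (le_trans sup0) ?ltW.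
by rewrite leNgt lt_sup_mid.
Qed.

Section Cmeasure_prodP.
Context d (T : measurableType d) (R : realType) (P : probability T R).
Context (delta : R) (delta_lt1 : delta < 1).

Lemma Sev_eventually_in_Tclass n (A : set (n.-tuple T)) (s : R) : measurable A ->
  s < probP P A ->
  exists k0, forall k, (k0 < k)%N -> Tclass P delta (n * k) (Sev A `[s, 1] k).
Proof.
move=> mA sp; have ps : 0 < probP P A - s by rewrite subr_gt0.
have [k0 hk0] := deviationC_in_Tclass P mA delta_lt1 ps.
exists k0 => k hk; have [mD TD] := hk0 k hk.
have mS : measurable (Sev A `[s, 1] k) by exact: measurable_Sev.
split=> //; apply: le_trans TD (le_prodP P mD mS _).
by apply: deviationC_sub_Sev => //; apply: leq_ltn_trans hk.
Qed.

Lemma Sev_eventually_avoids_Tclass n (A : set (n.-tuple T)) (s : R) :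
  measurable A -> probP P A < s ->
  exists k0, forall k, (k0 < k)%N ->
    exists2 G, Tclass P delta (n * k) G & G `&` Sev A `[s, 1] k = set0.
Proof.
move=> mA ps; have sp : 0 < s - probP P A by rewrite subr_gt0.
have [k0 hk0] := deviationC_in_Tclass P mA delta_lt1 sp.
exists k0 => k hk; exists (~` deviation P A k (s - probP P A)); first exact: hk0.
by apply: deviationC_Sev_disjoint => //; apply: leq_ltn_trans hk.
Qed.

Lemma Sev_itv01_in_Tclass n (A : set (n.-tuple T)) k : measurable A -> (0 < k)%N ->
  Tclass P delta (n * k) (Sev A (`[0, 1] : interval R) k).
Proof.
move=> mA k0; rewrite Sev_itv1E // mul0r.
rewrite (_ : [set w | _] = setT); last first.
  by apply/seteqP; split => // w _; exact: block_count_ge0.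
by split=> //; rewrite prodP_setT lee_fin ltW.
Qed.

Lemma Cmeasure_eq_prodP (C : xclass T) n (A : set (n.-tuple T)) :
  (0 < n)%N -> measurable A ->
  (forall m, (0 < m)%N -> Tclass P delta m `<=` C m) ->
  (forall m, (0 < m)%N -> forall X Y, C m X -> Tclass P delta m Y ->
     X `&` Y <> set0) ->
  Cmeasure C A = prodP P A.
Proof.
move=> n0 mA TC CT; have nk_gt0 k : (0 < k)%N -> (0 < n * k)%N by rewrite muln_gt0 n0.
rewrite prodP_probP //; apply: ereal_sup_EFin_eq.
- split; first by rewrite lexx ler01.
  by exists 0%N => k k0; apply/TC/Sev_itv01_in_Tclass; rewrite ?nk_gt0.
- move=> s s0 sp; split; first by rewrite s0 (le_trans (ltW sp)) ?probP_le1.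
  have [k0 hk0] := Sev_eventually_in_Tclass mA sp.
  by exists k0 => k hk; apply/TC/hk0 => //; rewrite nk_gt0 // (leq_ltn_trans _ hk).
- move=> s [_ [k1 hk1]]; rewrite leNgt; apply/negP => ps.
  have [k0 hk0] := Sev_eventually_avoids_Tclass mA ps.
  have [lt_k0 lt_k1] : (k0 < (maxn k0 k1).+1)%N /\ (k1 < (maxn k0 k1).+1)%N.
    by rewrite !ltnS leq_maxl leq_maxr.
  have [G TG GS] := hk0 _ lt_k0.
  by apply: (CT _ _ _ _ (hk1 _ lt_k1) TG); rewrite ?nk_gt0 // setIC.
Qed.

End Cmeasure_prodP.

Lemma Tclass_meet d (T : measurableType d) (R : realType) (P : probability T R)
    (delta : R) n (X Y : set (n.-tuple T)) :
  2^-1 < delta -> Tclass P delta n X -> Tclass P delta n Y -> X `&` Y <> set0.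
Proof.
move=> hd [mX TX] [mY TY] XY0; have := probP_disjoint P mX mY XY0.
by rewrite prodP_probP // lee_fin in TX; rewrite prodP_probP // lee_fin in TY; lra.
Qed.

Theorem theorem1 (d : measure_display) (T : measurableType d) (R : realType)
  (P : probability T R) (delta : R) (C : xclass T) :
  2^-1 < delta < 1 ->
  is_Cclass C ->
  (forall n : nat, (0 < n)%N -> forall A : set (n.-tuple T),
      Tclass P delta n A -> C n A) ->
  (forall n : nat, (0 < n)%N -> forall A : set (n.-tuple T), measurable A ->
      @Cmeasure _ _ R (Tclass P delta) n A = @Cmeasure _ _ R C n A)
  /\
  (forall n : nat, (0 < n)%N -> forall A : set (n.-tuple T), measurable A ->
      Cmeasure C A = prodP P A).
Proof.
move=> /andP[hd d1] hC TC.
have CT m : (0 < m)%N -> forall X Y, C m X -> Tclass P delta m Y -> X `&` Y <> set0.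
  by move=> m0 X Y CX TY; have [_ _ _ CC] := hC m m0; exact: CC CX (TC m m0 Y TY).
have TT m : (0 < m)%N -> forall X Y, Tclass P delta m X -> Tclass P delta m Y ->
    X `&` Y <> set0.
  by move=> _ X Y; exact: Tclass_meet hd.
split=> n n0 A mA; first rewrite (Cmeasure_eq_prodP d1 n0 mA TC CT).
  exact: (Cmeasure_eq_prodP d1 n0 mA (fun _ _ _ => id) TT).
exact: (Cmeasure_eq_prodP d1 n0 mA TC CT).
Qed.
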